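(* Let $r\ge 2$ be an integer. For $n>r$ let $f_r(n)=\max\{q_{\min}(G): G \text{ is a graph of order } n \text{ containing no } K_{r+1}\}$, and let $c_r=\sup\{q_{\min}(G)/v(G): G \text{ is a graph with no } K_{r+1}\}$. Then the limit $\lim_{n\to\infty} f_r(n)/n$ exists and equals $c_r$.
   Context: All graphs are finite and simple with at least one vertex; $v(G)$ is the number of vertices of $G$; $K_{r+1}$ is the complete graph on $r+1$ vertices and ''containing no $K_{r+1}$'' means having no subgraph isomorphic to $K_{r+1}$. For a graph $G$ with adjacency matrix $A$ and diagonal degree matrix $D$, the signless Laplacian is $Q(G)=D+A$, and $q_{\min}(G)$ denotes its smallest eigenvalue. *)

From HB Require Import structures.
From mathcomp Require Import all_boot all_order all_algebra.
From mathcomp Require Import all_classical all_reals all_analysis.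
Set Implicit Arguments. Unset Strict Implicit. Unset Printing Implicit Defensive.
Import Order.TTheory GRing.Theory Num.Theory.
Local Open Scope ring_scope.
Local Open Scope classical_set_scope.

Definition simple_graph (n : nat) (e : rel 'I_n) : Prop :=
  symmetric e /\ irreflexive e.

Definition has_clique (n s : nat) (e : rel 'I_n) : Prop :=
  exists S : {set 'I_n}, #|S| = s /\
    forall x y, x \in S -> y \in S -> x != y -> e x y.

Definition deg (n : nat) (e : rel 'I_n) (i : 'I_n) : nat := #|[set j | e i j]|.

Definition signless_laplacian (R : nzRingType) (n : nat) (e : rel 'I_n) : 'M[R]_n :=
  \matrix_(i, j) ((if i == j then (deg e i)%:R else 0) + (e i j)%:R).

(* Smallest eigenvalue of Q(G): the infimum (= minimum, the set being finite
   and nonempty for a real symmetric matrix) of the set of real eigenvalues. *)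
Definition qmin (R : realType) (n : nat) (e : rel 'I_n) : R :=
  inf [set a : R | eigenvalue (signless_laplacian R e) a].

Definition f_r (R : realType) (r n : nat) : R :=
  sup [set x : R | exists e : rel 'I_n,
         simple_graph e /\ ~ has_clique (r.+1) e /\ x = qmin R e].

Definition c_r (R : realType) (r : nat) : R :=
  sup [set x : R | exists (n : nat) (e : rel 'I_n), (0 < n)%N /\
         simple_graph e /\ ~ has_clique (r.+1) e /\ x = qmin R e / n%:R].

(* By the Rayleigh principle, [q_min(G)] is the minimum over unit vectors [x] of
   [sum_(ij in E) (x_i + x_j)^2].  Blowing up a [K_(r+1)]-free graph [G] on [m]
   vertices to [n] vertices, each vertex replaced by an independent class of
   [floor(n/m)] or [ceil(n/m)] vertices, keeps it [K_(r+1)]-free; testing [G] on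
   the vector of class sums and applying Cauchy-Schwarz inside each class gives
   [q_min(blow-up) >= (floor(n/m) + 1) q_min(G) - m].  Hence
   [f_r(n)/n >= q_min(G)/m - m/n], while [f_r(n) <= c_r n] by definition of [c_r]. *)

From HB Require Import structures.
From mathcomp Require Import all_boot all_order all_algebra.
From mathcomp Require Import all_classical all_reals all_analysis.
From mathcomp Require Import ring lra zify complex.
Import Order.TTheory GRing.Theory Num.Theory.
Import numFieldNormedType.Exports.
Local Open Scope ring_scope.
Local Open Scope classical_set_scope.
Set Implicit Arguments. Unset Strict Implicit. Unset Printing Implicit Defensive.

Section SymmetricRayleigh.
Variables (R : realType) (n : nat) (A : 'M[R]_n).
Hypothesis A_sym : A^T = A.

Local Notation toC := (real_complex R).
Let Ac := map_mx toC A.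
Let P := spectralmx Ac.
Let d := spectral_diag Ac.

Let Ac_hermsym : Ac \is hermsymmx.
Proof.
apply: realsym_hermsym.
  by apply/is_hermitianmxP; rewrite expr0 scale1r map_mx_id // /Ac map_trmx A_sym.
by apply/mxOverP => i j; rewrite mxE; apply/complex_realP; eexists.
Qed.

Let Ac_diag : Ac = invmx P *m diag_mx d *m P.
Proof. exact/orthomx_spectralP/hermitian_normalmx. Qed.

Let d_real j : d 0 j = toC (complex.Re (d 0 j)).
Proof.
by rewrite RRe_real //; apply: (mxOverP (hermitian_spectral_diag_real Ac_hermsym)).
Qed.

Let spectral_diag_eigenvalue j : eigenvalue A (complex.Re (d 0 j)).
Proof.
rewrite -(eigenvalue_map toC).
suff : eigenvalue Ac (d 0 j) by rewrite {1}d_real.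
apply/eigenvalueP; exists (row j P).
  have PAc : P *m Ac = diag_mx d *m P.
    by rewrite Ac_diag !mulmxA mulmxV ?spectral_unit // mul1mx.
  by rewrite -row_mul PAc row_mul row_diag_mx -scalemxAl -rowE.
apply/eqP => /(congr1 (mulmx^~ (invmx P))).
rewrite rowE mulmxK ?spectral_unit // mul0mx => /matrixP/(_ 0 j).
by rewrite !mxE !eqxx /= => /eqP; rewrite pnatr_eq0.
Qed.

(* In the eigenbasis [y = x P^-1] the form is [sum_j d_j |y_j|^2]. *)
Let spectral_rayleigh (l : R) : (forall j, l <= complex.Re (d 0 j)) ->
  forall x : 'rV[R]_n, l * (x *m x^T) 0 0 <= (x *m A *m x^T) 0 0.
Proof.
move=> l_min x; pose xc := map_mx toC x.
have formC : toC ((x *m A *m x^T) 0 0) = (xc *m Ac *m xc^T) 0 0.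
  by rewrite /xc /Ac map_trmx -!map_mxM [RHS]mxE.
have normC : toC ((x *m x^T) 0 0) = (xc *m xc^T) 0 0.
  by rewrite /xc map_trmx -map_mxM [RHS]mxE.
rewrite -lecR rmorphM /= formC normC.
have Pu : P \is unitarymx := spectral_unitarymx Ac.
pose Q := map_mx Num.conj P^T.
have QP : Q *m P = 1%:M by rewrite /Q -invmx_unitary // mulVmx ?spectral_unit.
pose y := xc *m Q; pose yc := map_mx Num.conj y^T.
have Pyc : P *m xc^T = yc.
  rewrite /yc /y trmx_mul map_mxM /Q trmxCK.
  congr (_ *m _); apply/matrixP => i j; rewrite !mxE.
  by apply/esym/CrealP/complex_realP; eexists.
have -> : xc *m Ac *m xc^T = y *m diag_mx d *m yc.
  by rewrite Ac_diag invmx_unitary // /y -!mulmxA Pyc.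
have -> : xc *m xc^T = y *m yc.
  by rewrite /y -mulmxA -[in LHS](mul1mx xc^T) -QP -mulmxA Pyc.
rewrite mul_mx_diag !mxE mulr_sumr; apply: ler_sum => j _; rewrite !mxE.
rewrite -[X in _ <= X]mulrA [X in _ <= X]mulrCA.
by apply: ler_wpM2r; [rewrite mul_conjC_ge0 | rewrite d_real lecR].
Qed.

Lemma symmetric_min_eigenvalue : (0 < n)%N ->
  exists2 l : R, eigenvalue A l &
    forall x : 'rV[R]_n, l * (x *m x^T) 0 0 <= (x *m A *m x^T) 0 0.
Proof.
move=> n_gt0.
have [k _ k_min] :=
  @arg_minP _ _ 'I_n (Ordinal n_gt0) xpredT (fun j => complex.Re (d 0 j)) isT.
exists (complex.Re (d 0 k)); first exact: spectral_diag_eigenvalue.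
by apply: spectral_rayleigh => j; apply: k_min.
Qed.

End SymmetricRayleigh.

Section SignlessLaplacianForm.
Variables (R : realType) (n : nat) (e : rel 'I_n).

Definition lap_form (x : 'I_n -> R) : R :=
  \sum_i \sum_j (e i j)%:R * (x i ^+ 2 + x i * x j).

Definition sqnorm (x : 'I_n -> R) : R := \sum_i x i ^+ 2.

(* [deg] counts a classical set, hence [in_setE] below. *)
Lemma deg_sum i : (deg e i)%:R = \sum_j (e i j)%:R :> R.
Proof.
rewrite /deg -sum1_card big_mkcond natr_sum; apply: eq_bigr => j _.
have -> : (j \in [set j0 | e i j0]) = e i j by apply/idP/idP; rewrite in_setE.
by case: (e i j).
Qed.

Lemma deg_le_order i : (deg e i <= n)%N.
Proof. by rewrite /deg (leq_trans (max_card _)) ?card_ord. Qed.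

Lemma lap_formE x :
  lap_form x = \sum_i (deg e i)%:R * x i ^+ 2 + \sum_i \sum_j (e i j)%:R * (x i * x j).
Proof.
rewrite -big_split; apply: eq_bigr => i _ /=.
by rewrite deg_sum mulr_suml -big_split; apply: eq_bigr => j _ /=; rewrite mulrDr.
Qed.

Lemma signless_laplacian_form (x : 'rV[R]_n) :
  (x *m signless_laplacian R e *m x^T) 0 0 = lap_form (fun i => x 0 i).
Proof.
rewrite mxE /lap_form.
under eq_bigr => j _ do rewrite !mxE mulr_suml.
rewrite exchange_big /=; apply: eq_bigr => i _.
under eq_bigr => j _ do rewrite !mxE mulrDr mulrDl.
rewrite big_split /= (bigD1 i) //= eqxx big1 => [|j /negbTE]; last first.
  by rewrite eq_sym => ->; rewrite mulr0 mul0r.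
rewrite addr0 deg_sum mulr_sumr mulr_suml -big_split /=; apply: eq_bigr => j _.
by rewrite expr2; ring.
Qed.

Lemma sqnorm_row (x : 'rV[R]_n) : (x *m x^T) 0 0 = sqnorm (fun i => x 0 i).
Proof. by rewrite mxE; apply: eq_bigr => i _; rewrite mxE expr2. Qed.

Lemma sqnorm_ge0 x : 0 <= sqnorm x.
Proof. by apply: sumr_ge0 => i _; rewrite sqr_ge0. Qed.

Lemma sqnorm_gt0 (x : 'rV[R]_n) : x != 0 -> 0 < sqnorm (fun i => x 0 i).
Proof.
move=> x_neq0; rewrite lt_def sqnorm_ge0 andbT; apply: contra x_neq0 => /eqP.
move/psumr_eq0P => x0; apply/eqP/matrixP => i j; rewrite ord1 mxE.
by apply/eqP; rewrite -sqrf_eq0; apply/eqP/x0 => // k _; rewrite sqr_ge0.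
Qed.

Hypothesis e_sym : symmetric e.

Lemma signless_laplacian_sym : (signless_laplacian R e)^T = signless_laplacian R e.
Proof. by apply/matrixP => i j; rewrite !mxE e_sym eq_sym; case: eqP => // ->. Qed.

(* Symmetrizing, [2 lap_form x] is the sum of [(x_i + x_j)^2] over ordered edges. *)
Lemma lap_form_ge0 x : 0 <= lap_form x.
Proof.
have swap : lap_form x = \sum_i \sum_j (e i j)%:R * (x j ^+ 2 + x j * x i).
  rewrite /lap_form exchange_big; apply: eq_bigr => i _; apply: eq_bigr => j _.
  by rewrite e_sym.
suff : 0 <= lap_form x + lap_form x by lra.
rewrite {2}swap -big_split; apply: sumr_ge0 => i _; rewrite -big_split.
apply: sumr_ge0 => j _ /=; rewrite -mulrDr mulr_ge0 //.
have -> : x i ^+ 2 + x i * x j + (x j ^+ 2 + x j * x i) = (x i + x j) ^+ 2.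
  by rewrite !expr2; ring.
exact: sqr_ge0.
Qed.

Lemma eigenvalue_lap_form mu : eigenvalue (signless_laplacian R e) mu ->
  exists2 v, 0 < sqnorm v & lap_form v = mu * sqnorm v.
Proof.
move/eigenvalueP => [v vQ v_neq0]; exists (fun i => v 0 i); first exact: sqnorm_gt0.
by rewrite -signless_laplacian_form -sqnorm_row vQ -scalemxAl mxE.
Qed.

Hypothesis n_gt0 : (0 < n)%N.

Lemma qmin_rayleigh :
  eigenvalue (signless_laplacian R e) (qmin R e) /\
  forall x, qmin R e * sqnorm x <= lap_form x.
Proof.
have [l l_eig l_min] := symmetric_min_eigenvalue signless_laplacian_sym n_gt0.
have rowK x : (fun i => (\row_j x j) 0 i) = x by apply/funext => i; rewrite mxE.
have l_le mu : eigenvalue (signless_laplacian R e) mu -> l <= mu.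
  move=> /eigenvalue_lap_form [v v_gt0 vE].
  by have := l_min (\row_i v i); rewrite signless_laplacian_form sqnorm_row !rowK vE ler_pM2r.
have -> : qmin R e = l.
  apply/le_anti/andP; split; last by apply: lb_le_inf; [exists l | move=> mu /l_le].
  by apply: ge_inf => //; exists l => mu /l_le.
split=> // x.
by have := l_min (\row_i x i); rewrite signless_laplacian_form sqnorm_row !rowK.
Qed.

Lemma qmin_ge L : (forall x, L * sqnorm x <= lap_form x) -> L <= qmin R e.
Proof.
move=> L_le; have [/eigenvalue_lap_form [v v_gt0 vE] _] := qmin_rayleigh.
by have := L_le v; rewrite vE ler_pM2r.
Qed.

Lemma qmin_ge0 : 0 <= qmin R e.
Proof. by apply: qmin_ge => x; rewrite mul0r lap_form_ge0. Qed.

Lemma qmin_le_deg a : irreflexive e -> qmin R e <= (deg e a)%:R.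
Proof.
move=> e_irr; pose x i : R := (i == a)%:R.
have x_norm : sqnorm x = 1.
  rewrite /sqnorm (bigD1 a) //= big1 => [|i /negbTE ia]; last by rewrite /x ia expr0n.
  by rewrite /x eqxx expr1n addr0.
have x_form : lap_form x = (deg e a)%:R.
  rewrite /lap_form (bigD1 a) //= [X in _ + X]big1 => [|i /negbTE ia]; last first.
    by apply: big1 => j _; rewrite /x ia expr0n mul0r addr0 mulr0.
  rewrite addr0 deg_sum; apply: eq_bigr => j _; rewrite /x eqxx expr1n mul1r.
  by case: eqP => [->|_]; rewrite ?e_irr ?mul0r // addr0 mulr1.
by have := qmin_rayleigh.2 x; rewrite x_norm x_form mulr1.
Qed.

Lemma qmin_le_order : irreflexive e -> qmin R e <= n%:R.
Proof.
move=> e_irr; apply: le_trans (qmin_le_deg (Ordinal n_gt0) e_irr) _.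
by rewrite ler_nat deg_le_order.
Qed.

End SignlessLaplacianForm.

Lemma count_mod_eq m n b : (0 < m)%N -> (b < m)%N ->
  count (fun i => (i %% m == b)%N) (iota 0 n) = (n %/ m + (b < n %% m))%N.
Proof.
move=> m_gt0 b_lt; elim: n => [|n IHn]; first by rewrite div0n mod0n.
rewrite -addn1 iotaD count_cat IHn /= add0n addn0.
by case: (ltnP b (n %% m)) => ?; case: (ltnP b ((n + 1) %% m)) => ?; case: eqP => ? /=; nia.
Qed.

Lemma sqr_sum_le_card_mul_sum_sqr (R : realDomainType) (I : finType) (P : pred I)
    (x : I -> R) :
  (\sum_(i | P i) x i) ^+ 2 <= (\sum_(i | P i) 1) * \sum_(i | P i) x i ^+ 2.
Proof.
set N := \sum_(i | P i) 1; set s := \sum_(i | P i) x i; set S := \sum_(i | P i) x i ^+ 2.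
have : 0 <= \sum_(i | P i) \sum_(j | P j) (x i - x j) ^+ 2.
  by apply: sumr_ge0 => i _; apply: sumr_ge0 => j _; rewrite sqr_ge0.
suff -> : \sum_(i | P i) \sum_(j | P j) (x i - x j) ^+ 2 = N * S + N * S - 2 * s ^+ 2.
  by lra.
have -> : \sum_(i | P i) \sum_(j | P j) (x i - x j) ^+ 2 =
    \sum_(i | P i) (x i ^+ 2 * N + S - 2 * (x i * s)).
  apply: eq_bigr => i _; rewrite /N /S /s !mulr_sumr -!big_split -sumrB /=.
  by apply: eq_bigr => j _; rewrite !expr2; ring.
rewrite sumrB big_split /= -mulr_suml -mulr_sumr -mulr_suml.
have -> : \sum_(i | P i) S = N * S.
  by rewrite /N mulr_suml; apply: eq_bigr => i _; rewrite mul1r.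
by rewrite [S * N]mulrC expr2.
Qed.

Section Blowup.
Variables (R : realType) (m : nat) (e : rel 'I_m) (m_gt0 : (0 < m)%N).

Definition blowup_class n (i : 'I_n) : 'I_m := Ordinal (ltn_pmod i m_gt0).

Definition blowup n : rel 'I_n := fun i j => e (blowup_class i) (blowup_class j).
Arguments blowup : clear implicits.

Lemma blowup_simple n : simple_graph e -> simple_graph (blowup n).
Proof. by case=> e_sym e_irr; split => [i j|i]; [exact: e_sym | exact: e_irr]. Qed.

Lemma blowup_no_clique n s : irreflexive e -> ~ has_clique s e -> ~ has_clique s (blowup n).
Proof.
move=> e_irr no_clique [S [card_S S_clique]]; apply: no_clique.
have cls_inj : {in S &, injective (@blowup_class n)}.
  move=> i j iS jS eq_ij; apply/eqP/negPn/negP => /(S_clique i j iS jS).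
  by rewrite /blowup eq_ij e_irr.
exists (@blowup_class n @: S); split; first by rewrite card_in_imset.
move=> _ _ /imsetP [i iS ->] /imsetP [j jS ->] neq_ij.
by apply: S_clique => //; apply: contra neq_ij => /eqP ->.
Qed.

Lemma card_blowup_class n a :
  (n %/ m <= \sum_(i : 'I_n | blowup_class i == a) 1 <= n %/ m + 1)%N.
Proof.
have -> : (\sum_(i : 'I_n | blowup_class i == a) 1 =
           count (fun i => (i %% m == a)%N) (iota 0 n))%N.
  by rewrite -sum1_count -[n in iota 0 n]subn0 -/(index_iota 0 n) big_mkord.
by rewrite count_mod_eq //; case: (a < n %% m)%N => /=; lia.
Qed.

Section BlowupForm.
Variables (n : nat) (x : 'I_n -> R).
Hypothesis e_simple : simple_graph e.

Local Notation cls := (@blowup_class n).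
Let S a := \sum_(i | cls i == a) x i ^+ 2.
Let s a := \sum_(i | cls i == a) x i.
Let t a := \sum_(i | cls i == a) (1 : R).
Let T : R := (n %/ m + 1)%:R.
Let l := qmin R e.

Let sqnorm_blowup : sqnorm x = \sum_a S a.
Proof. by rewrite /sqnorm (partition_big cls xpredT). Qed.

Let lap_form_blowup : lap_form (blowup n) x =
  \sum_a (\sum_b (e a b)%:R * t b) * S a + \sum_a \sum_b (e a b)%:R * (s a * s b).
Proof.
rewrite -big_split /lap_form (partition_big cls xpredT) //=; apply: eq_bigr => a _.
rewrite mulr_suml -big_split /=.
rewrite (eq_bigr (fun i => \sum_b (e a b)%:R * \sum_(j | cls j == b) (x i ^+ 2 + x i * x j)));
  last first.
  move=> i /eqP cls_i; rewrite (partition_big cls xpredT) //=; apply: eq_bigr => b _.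
  by rewrite mulr_sumr; apply: eq_bigr => j /eqP cls_j; rewrite /blowup cls_i cls_j.
rewrite exchange_big /=; apply: eq_bigr => b _.
rewrite -mulr_sumr -mulrA -mulrDr; congr (_ * _).
have row_sum i : \sum_(j | cls j == b) (x i ^+ 2 + x i * x j) = x i ^+ 2 * t b + x i * s b.
  by rewrite big_split /= /t /s !mulr_sumr; congr (_ + _); apply: eq_bigr => j _; rewrite mulr1.
by rewrite (eq_bigr _ (fun i _ => row_sum i)) big_split /= -!mulr_suml mulrC.
Qed.

Let class_size_bounds b : T - 1 <= t b <= T.
Proof.
have -> : t b = (\sum_(i | cls i == b) 1%N)%:R by rewrite natr_sum.
have /andP [lo hi] := card_blowup_class n b.
by rewrite /T natrD addrK !ler_nat lo -natrD ler_nat.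
Qed.

Let class_sum_sqr_le a : s a ^+ 2 <= T * S a.
Proof.
apply: le_trans (sqr_sum_le_card_mul_sum_sqr _ _) _; apply: ler_wpM2r.
  by apply: sumr_ge0 => i _; rewrite sqr_ge0.
by have /andP [] := class_size_bounds a.
Qed.

Let class_bound a : (T * l - m%:R) * S a + ((deg e a)%:R - l) * s a ^+ 2 <=
  (\sum_b (e a b)%:R * t b) * S a.
Proof.
set D := (deg e a)%:R : R; set E := \sum_b _.
have S_ge0 : 0 <= S a by apply: sumr_ge0 => i _; rewrite sqr_ge0.
have l_le_D : l <= D by apply: qmin_le_deg; case: e_simple.
have D_le_m : D <= m%:R by rewrite ler_nat deg_le_order.
have E_ge : (T - 1) * D <= E.
  rewrite /D deg_sum /E mulr_sumr; apply: ler_sum => b _; rewrite mulrC.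
  by apply: ler_wpM2l; [exact: ler0n | have /andP [] := class_size_bounds b].
have := class_sum_sqr_le a.
have p1 : 0 <= (E - (T - 1) * D) * S a by apply: mulr_ge0 => //; rewrite subr_ge0.
have p2 : 0 <= (D - l) * (T * S a - s a ^+ 2) by apply: mulr_ge0; rewrite subr_ge0.
have p3 : 0 <= (m%:R - D) * S a by apply: mulr_ge0 => //; rewrite subr_ge0.
nra.
Qed.

Lemma lap_form_blowup_ge : (T * l - m%:R) * sqnorm x <= lap_form (blowup n) x.
Proof.
have [e_sym _] := e_simple.
rewrite lap_form_blowup sqnorm_blowup.
have := (qmin_rayleigh R e_sym m_gt0).2 s; rewrite lap_formE /sqnorm -/l.
have : (T * l - m%:R) * \sum_a S a +
    (\sum_a (deg e a)%:R * s a ^+ 2 - l * \sum_a s a ^+ 2) <=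
    \sum_a (\sum_b (e a b)%:R * t b) * S a.
  rewrite !mulr_sumr -sumrB -big_split; apply: ler_sum => a _.
  by rewrite -mulrBl; exact: class_bound.
lra.
Qed.

End BlowupForm.

Lemma qmin_blowup n : (0 < n)%N -> simple_graph e ->
  (n %/ m + 1)%:R * qmin R e - m%:R <= qmin R (blowup n).
Proof.
move=> n_gt0 e_simple; have [sym_blowup _] := blowup_simple n e_simple.
by apply: qmin_ge => // x; apply: lap_form_blowup_ge.
Qed.

End Blowup.

Lemma cvg_approx_from_below (R : realType) (a : nat -> R) (c : R) :
  (forall n, (0 < n)%N -> a n <= c) ->
  (forall eps, 0 < eps -> exists2 u, c - eps <= u &
     exists K, forall n, (0 < n)%N -> u - K / n%:R <= a n) ->
  a @ \oo --> c.
Proof.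
move=> a_le approx; apply/cvgrPdist_le => eps eps_gt0.
have [u u_ge [K a_ge]] := approx (eps / 2) (divr_gt0 eps_gt0 (ltr0Sn _ 1)).
exists (Num.truncn (`|K| * 2 / eps)).+1 => // n /= N_le.
have n_gt0 : (0 < n)%N by apply: leq_trans N_le.
have K_small : K / n%:R <= eps / 2.
  have : `|K| * 2 / eps < n%:R.
    by apply: lt_le_trans (truncnS_gt _) _; rewrite ler_nat.
  rewrite ler_pdivrMr ?ltr0n // ltr_pdivrMr // => K_lt.
  have := ler_norm K; nra.
rewrite ger0_norm ?subr_ge0 ?a_le //; have := a_ge n n_gt0; lra.
Qed.

Lemma empty_graph_simple n : simple_graph (fun _ _ : 'I_n => false).
Proof. by []. Qed.

Lemma empty_graph_no_clique n s : (1 < s)%N -> ~ has_clique s (fun _ _ : 'I_n => false).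
Proof.
move=> s_gt1 [S [card_S S_clique]]; rewrite -card_S in s_gt1.
have [i [j [iS jS neq_ij]]] := card_gt1P s_gt1.
by have := S_clique i j iS jS neq_ij.
Qed.

Section ExtremalFunction.
Variables (R : realType) (r : nat).
Hypothesis r_gt0 : (0 < r)%N.

Let empty_graph_free n :
  simple_graph (fun _ _ : 'I_n => false) /\ ~ has_clique r.+1 (fun _ _ : 'I_n => false).
Proof. by split; [exact: empty_graph_simple | apply: empty_graph_no_clique; rewrite ltnS]. Qed.

Let c_r_has_sup : has_sup [set x : R | exists (n : nat) (e : rel 'I_n), (0 < n)%N /\
  simple_graph e /\ ~ has_clique (r.+1) e /\ x = qmin R e / n%:R].
Proof.
split.
  have [simple0 free0] := @empty_graph_free 1.
  by exists (qmin R (fun _ _ : 'I_1 => false) / 1%:R), 1%N, (fun _ _ => false).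
exists 1 => _ [n [e [n_gt0 [[e_sym e_irr] [_ ->]]]]].
by rewrite ler_pdivrMr ?ltr0n // mul1r qmin_le_order.
Qed.

Lemma qmin_le_c_r n (e : rel 'I_n) : (0 < n)%N -> simple_graph e ->
  ~ has_clique r.+1 e -> qmin R e <= c_r R r * n%:R.
Proof.
move=> n_gt0 e_simple e_free; rewrite -ler_pdivrMr ?ltr0n //.
by apply: ub_le_sup; [case: c_r_has_sup | exists n, e].
Qed.

Lemma f_r_le_c_r n : (0 < n)%N -> f_r R r n <= c_r R r * n%:R.
Proof.
move=> n_gt0; apply: ge_sup.
  have [simple0 free0] := @empty_graph_free n.
  by exists (qmin R (fun _ _ : 'I_n => false)), (fun _ _ => false).
by move=> _ [e [e_simple [e_free ->]]]; exact: qmin_le_c_r.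
Qed.

Lemma qmin_le_f_r n (e : rel 'I_n) : (0 < n)%N -> simple_graph e ->
  ~ has_clique r.+1 e -> qmin R e <= f_r R r n.
Proof.
move=> n_gt0 e_simple e_free; apply: ub_le_sup; last by exists e.
exists n%:R => _ [e' [[e'_sym e'_irr] [_ ->]]].
exact: qmin_le_order.
Qed.

Lemma f_r_ge_blowup m (e : rel 'I_m) (m_gt0 : (0 < m)%N) n : (0 < n)%N ->
  simple_graph e -> ~ has_clique r.+1 e ->
  n%:R * (qmin R e / m%:R) - m%:R <= f_r R r n.
Proof.
move=> n_gt0 e_simple e_free.
apply: le_trans (qmin_le_f_r n_gt0 (blowup_simple m_gt0 n e_simple) _); last first.
  by apply: blowup_no_clique => //; case: e_simple.
apply: le_trans (qmin_blowup R m_gt0 n_gt0 e_simple); rewrite lerD2r mulrA mulrAC.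
apply: ler_wpM2r; first by case: e_simple => e_sym _; exact: qmin_ge0.
rewrite ler_pdivrMr ?ltr0n // -natrM ler_nat.
by rewrite addn1 ltnW // ltn_ceil.
Qed.

Lemma c_r_approx eps : 0 < eps -> exists m (e : rel 'I_m), [/\ (0 < m)%N,
  simple_graph e, ~ has_clique r.+1 e & c_r R r - eps < qmin R e / m%:R].
Proof.
move=> eps_gt0; have [_ [m [e [m_gt0 [e_simple [e_free ->]]]]] close] :=
  sup_adherent eps_gt0 c_r_has_sup.
by exists m, e.
Qed.

End ExtremalFunction.

Theorem theorem2 (R : realType) (r : nat) (hr : (2 <= r)%N) :
  (fun n : nat => f_r R r n / n%:R) @ \oo --> c_r R r.
Proof.
have r_gt0 : (0 < r)%N by apply: leq_trans hr.
apply: cvg_approx_from_below => [n n_gt0 | eps eps_gt0].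
  by rewrite ler_pdivrMr ?ltr0n // f_r_le_c_r.
have [m [e [m_gt0 e_simple e_free close]]] := c_r_approx r_gt0 eps_gt0.
exists (qmin R e / m%:R); first exact: ltW.
exists m%:R => n n_gt0.
rewrite ler_pdivlMr ?ltr0n // mulrBl divfK ?pnatr_eq0 -?lt0n // mulrC.
exact: f_r_ge_blowup.
Qed.
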